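(* Let $L\in\mathcal L$ and let $A$ be a pure submodule of $L$ such that every strict $\mathcal L$-atomic module is also strict $\{A\}$-atomic. Then the inclusion $A\subseteq L$ is locally $\mathcal P$-split, where $\mathcal P$ is the class of strict $\mathcal L$-atomic modules.
   Context: $R$ is a ring with $1$; modules are left $R$-modules; $\mathcal L$ is a nonempty class of modules. pp formulas and $\phi(M)$ as usual. $(M,\bar m)$ is an $\mathcal L$-free realization of a pp formula $\phi$ if $\bar m\in\phi(M)$ and for every $L\in\mathcal L$ and $\bar c\in\phi(L)$ there is a homomorphism $M\to L$ sending $\bar m$ to $\bar c$; $M$ is strict $\mathcal L$-atomic if every finite tuple in $M$ is an $\mathcal L$-free realization of some pp formula; ''strict $\{A\}$-atomic'' is this notion for the one-element class $\{A\}$. For a class $\mathcal P$, a homomorphism $f:A\to B$ is locally $\mathcal P$-split if for every tuple $\bar a$ in $A$, every $P\in\mathcal P$, every tuple $\bar p$ in $P$ and every homomorphism $g:P\to B$ with $g(\bar p)=f(\bar a)$, there is a homomorphism $h:P\to A$ with $h(\bar p)=\bar a$. *)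

From HB Require Import structures.
From mathcomp Require Import all_boot all_algebra.
Set Implicit Arguments. Unset Strict Implicit. Unset Printing Implicit Defensive.
Import GRing.Theory.
Local Open Scope ring_scope.

Section PP.
Variable R : pzRingType.

Definition is_hom (M N : lmodType R) (f : M -> N) : Prop :=
  (forall x y : M, f (x + y) = f x + f y) /\
  (forall (r : R) (x : M), f (r *: x) = r *: f x).

(* a pp formula phi(x_0..x_{n-1}) = exists y_0..y_{k-1},
   /\_{i<m}  sum_j a_ij x_j + sum_l b_il y_l = 0 *)
Record ppf (n : nat) := PPF {
  pp_k : nat;
  pp_m : nat;
  pp_a : 'I_pp_m -> 'I_n -> R;
  pp_b : 'I_pp_m -> 'I_pp_k -> R }.
Arguments pp_k {n}. Arguments pp_m {n}. Arguments pp_a {n}. Arguments pp_b {n}.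

Definition pp_sat n (phi : ppf n) (M : lmodType R) (x : 'I_n -> M) : Prop :=
  exists y : 'I_(pp_k phi) -> M, forall i : 'I_(pp_m phi),
    \sum_(j < n) pp_a phi i j *: x j + \sum_(l < pp_k phi) pp_b phi i l *: y l = 0.

Definition free_realization (Lc : lmodType R -> Prop) n (phi : ppf n)
    (M : lmodType R) (m : 'I_n -> M) : Prop :=
  pp_sat phi m /\
  forall (N : lmodType R), Lc N -> forall c : 'I_n -> N, pp_sat phi c ->
    exists f : M -> N, is_hom f /\ forall i, f (m i) = c i.

Definition strict_atomic (Lc : lmodType R -> Prop) (M : lmodType R) : Prop :=
  forall n (m : 'I_n -> M), exists phi : ppf n, free_realization Lc phi m.

Definition single_class (A : lmodType R) : lmodType R -> Prop := fun N => N = A.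

Definition locally_split (P : lmodType R -> Prop) (A B : lmodType R) (f : A -> B) : Prop :=
  forall n (a : 'I_n -> A) (Q : lmodType R), P Q ->
  forall (p : 'I_n -> Q) (g : Q -> B), is_hom g -> (forall i, g (p i) = f (a i)) ->
    exists h : Q -> A, is_hom h /\ forall i, h (p i) = a i.

Definition pure_embedding (A L : lmodType R) (iota : A -> L) : Prop :=
  is_hom iota /\ injective iota /\
  forall n (phi : ppf n) (a : 'I_n -> A), pp_sat phi (fun i => iota (a i)) -> pp_sat phi a.

End PP.

From mathcomp Require Import all_boot all_algebra.
Import GRing.Theory.
Local Open Scope ring_scope.

(* Let Q be strict L-atomic, p a tuple of Q, g : Q -> L a
   homomorphism with g p = iota a.  By hypothesis Q is also strict
   {A}-atomic, so p is an {A}-free realization of some pp formula phi.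
   Since homomorphisms preserve pp formulas, iota a = g p satisfies phi in L,
   and purity of A in L pulls this back to a satisfying phi in A.  Freeness of
   (Q, p) over {A} then yields h : Q -> A with h p = a. *)

Section PPFormulas.
Context {R : pzRingType}.

Lemma hom0 {M N : lmodType R} {g : M -> N} : is_hom g -> g 0 = 0.
Proof.
move=> [gD _]; have g00 : g 0 + g 0 = g 0 + 0 by rewrite -gD !addr0.
exact: addrI g00.
Qed.

Lemma hom_pp {M N : lmodType R} {g : M -> N} {n} {phi : ppf R n}
    {x : 'I_n -> M} {x' : 'I_n -> N} :
  is_hom g -> (forall i, g (x i) = x' i) -> pp_sat phi x -> pp_sat phi x'.
Proof.
move=> hg gx [y Hy]; have [gD gZ] := hg; have g0 := hom0 hg.
exists (fun l => g (y l)) => i.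
have := congr1 g (Hy i); rewrite g0 gD !(big_morph g gD g0) => gHy.
rewrite -[RHS]gHy.
by congr (_ + _); apply: eq_bigr => j _; rewrite gZ ?gx.
Qed.

Lemma atomic_map_of_pp_type (A Q : lmodType R) n (p : 'I_n -> Q) (a : 'I_n -> A) :
  strict_atomic (single_class A) Q ->
  (forall phi : ppf R n, pp_sat phi p -> pp_sat phi a) ->
  exists h : Q -> A, is_hom h /\ forall i, h (p i) = a i.
Proof.
move=> HQ ppa; have [phi [sat_p free_p]] := HQ n p.
exact: free_p A (erefl A) a (ppa phi sat_p).
Qed.

End PPFormulas.

Theorem lemma2p7 (R : pzRingType) (Lc : lmodType R -> Prop) (L : lmodType R)
  (HL : Lc L) (A : lmodType R) (iota : A -> L)
  (Hpure : pure_embedding iota)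
  (Hatom : forall M : lmodType R, strict_atomic Lc M -> strict_atomic (single_class A) M) :
  locally_split (strict_atomic Lc) iota.
Proof.
move=> n a Q HQ p g hg gp.
apply: atomic_map_of_pp_type (Hatom Q HQ) _ => phi sat_p.
have [_ [_ reflect_pp]] := Hpure.
(* g p = iota a satisfies phi in L, and purity reflects it to A *)
exact: reflect_pp (hom_pp hg gp sat_p).
Qed.
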